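(* Let $R$ be a commutative ring, $M$ a non-zero $R$-module and $N\leq M$ a PS-hollow submodule. If $I$ is a minimal element (w.r.t. inclusion) of $A:=\{I\leq R \text{ ideal}: N\subseteq IM\}$, then $I$ is a hollow ideal of $R$, i.e. whenever $I=J+K$ for ideals $J,K\leq R$, we have $J=I$ or $K=I$.
   Context: An $R$-submodule $N\leq M$ is PS-hollow iff for every ideal $I\leq R$ and every submodule $L\leq M$: $N\subseteq IM+L$ implies $N\subseteq IM$ or $N\subseteq L$. *)

From HB Require Import structures.
From mathcomp Require Import all_boot all_order all_algebra.
Set Implicit Arguments. Unset Strict Implicit.
Import GRing.Theory.
Local Open Scope ring_scope.

Definition subset_of (T : Type) (A B : T -> Prop) : Prop := forall x, A x -> B x.
Definition same_set (T : Type) (A B : T -> Prop) : Prop := forall x, A x <-> B x.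

Definition is_ideal (R : comPzRingType) (I : R -> Prop) : Prop :=
  [/\ I 0, (forall x y, I x -> I y -> I (x + y)) & (forall r x, I x -> I (r * x))].

Definition is_submod (R : comPzRingType) (M : lmodType R) (N : M -> Prop) : Prop :=
  [/\ N 0, (forall x y, N x -> N y -> N (x + y)) & (forall (r : R) x, N x -> N (r *: x))].

Definition ideal_mod {R : comPzRingType} (M : lmodType R) (I : R -> Prop) : M -> Prop :=
  fun x => exists (n : nat) (a : 'I_n -> R) (m : 'I_n -> M),
    (forall k, I (a k)) /\ x = \sum_(k < n) a k *: m k.
Arguments ideal_mod {R} M I _.

Definition set_add (V : zmodType) (A B : V -> Prop) : V -> Prop :=
  fun x => exists y z, A y /\ B z /\ x = y + z.

Definition PS_hollow (R : comPzRingType) (M : lmodType R) (N : M -> Prop) : Prop :=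
  is_submod N /\
  forall (I : R -> Prop) (L : M -> Prop), is_ideal I -> is_submod L ->
    subset_of N (set_add (ideal_mod M I) L) ->
    subset_of N (ideal_mod M I) \/ subset_of N L.

(* If I = J + K then IM = JM + KM, so N lies in JM + KM.  PS-hollowness,
   applied to the ideal J and the submodule L = KM, puts N inside JM or KM;
   since J and K are contained in I, minimality of I gives J = I or K = I. *)

From mathcomp Require Import all_boot all_order all_algebra.
Set Implicit Arguments. Unset Strict Implicit.
Local Open Scope ring_scope.
Import GRing.Theory.

Section IdealMod.

Variables (R : comPzRingType) (M : lmodType R).

Lemma ideal_mod0 (I : R -> Prop) : ideal_mod M I 0.
Proof.
by exists 0%N, (fun _ => 0), (fun _ => 0); split=> [[]//|]; rewrite big_ord0.
Qed.

Lemma ideal_modD (I : R -> Prop) x y :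
  ideal_mod M I x -> ideal_mod M I y -> ideal_mod M I (x + y).
Proof.
move=> [n1 [a1 [m1 [Ia1 ->]]]] [n2 [a2 [m2 [Ia2 ->]]]].
pose glue T (f1 : 'I_n1 -> T) (f2 : 'I_n2 -> T) (i : 'I_(n1 + n2)) :=
  match split i with inl j => f1 j | inr j => f2 j end.
exists (n1 + n2)%N, (glue _ a1 a2), (glue _ m1 m2); split.
  by move=> k; rewrite /glue; case: (split k).
rewrite big_split_ord /=; congr (_ + _); apply: eq_bigr => i _.
  by rewrite /glue (unsplitK (inl i)).
by rewrite /glue (unsplitK (inr i)).
Qed.

Lemma ideal_modZ (I : R -> Prop) (r : R) x :
  ideal_mod M I x -> ideal_mod M I (r *: x).
Proof.
move=> [n [a [m [Ia ->]]]]; exists n, a, (fun k => r *: m k); split=> //.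
by rewrite scaler_sumr; apply: eq_bigr => k _; rewrite !scalerA mulrC.
Qed.

Lemma is_submod_ideal_mod (I : R -> Prop) : is_submod (ideal_mod M I).
Proof. by split; [apply: ideal_mod0 | apply: ideal_modD | apply: ideal_modZ]. Qed.

Lemma ideal_mod_subset (I I' : R -> Prop) :
  subset_of I I' -> subset_of (ideal_mod M I) (ideal_mod M I').
Proof. by move=> II' x [n [a [m [Ia ->]]]]; exists n, a, m; split=> // k; apply: II'. Qed.

Lemma ideal_mod_set_add (J K : R -> Prop) :
  subset_of (ideal_mod M (set_add J K))
            (set_add (ideal_mod M J) (ideal_mod M K)).
Proof.
move=> x [n [a [m [JKa ->]]]].
have /fin_all_exists[p Hp] :
    forall k, exists q : R * R, [/\ J q.1, K q.2 & a k = q.1 + q.2].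
  by move=> k; have [y [z [Jy [Kz ->]]]] := JKa k; exists (y, z).
exists (\sum_(k < n) (p k).1 *: m k), (\sum_(k < n) (p k).2 *: m k).
split; first by exists n, (fun k => (p k).1), m; split=> // k; case: (Hp k).
split; first by exists n, (fun k => (p k).2), m; split=> // k; case: (Hp k).
rewrite -big_split /=; apply: eq_bigr => k _.
by case: (Hp k) => _ _ ->; rewrite scalerDl.
Qed.

End IdealMod.

Section SetAdd.

Variables (V : zmodType) (A B : V -> Prop).

Lemma subset_set_addl : B 0 -> subset_of A (set_add A B).
Proof. by move=> B0 x Ax; exists x, 0; rewrite addr0. Qed.

Lemma subset_set_addr : A 0 -> subset_of B (set_add A B).
Proof. by move=> A0 x Bx; exists 0, x; rewrite add0r. Qed.

End SetAdd.

Theorem lemma5p3 (R : comPzRingType) (M : lmodType R) (N : M -> Prop) (I : R -> Prop) :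
  (exists m : M, m != 0) ->
  PS_hollow N ->
  is_ideal I ->
  subset_of N (ideal_mod M I) ->
  (forall J : R -> Prop, is_ideal J -> subset_of N (ideal_mod M J) ->
     subset_of J I -> same_set J I) ->
  forall J K : R -> Prop, is_ideal J -> is_ideal K ->
    same_set I (set_add J K) -> same_set J I \/ same_set K I.
Proof.
move=> _ [_ PS_N] _ NIM I_min J K idJ idK I_JK.
have [J0 _ _] := idJ; have [K0 _ _] := idK.
have JI : subset_of J I by move=> x /(subset_set_addl K0) /I_JK.
have KI : subset_of K I by move=> x /(subset_set_addr J0) /I_JK.
have N_JMKM : subset_of N (set_add (ideal_mod M J) (ideal_mod M K)).
  move=> x /NIM /(ideal_mod_subset (fun y => proj1 (I_JK y))).
  exact: ideal_mod_set_add.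
have [N_JM | N_KM] := PS_N J _ idJ (is_submod_ideal_mod M K) N_JMKM.
- by left; apply: I_min.
- by right; apply: I_min.
Qed.
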